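(* Let $C[\,]$ be a normal context and let $M,N\in\Lambda$. If $\langle C[\,],M^\bullet\rangle\to^*\underline{N}$, then $N\in\mathrm{NF}$.
   Context: **$\lambda$-terms and contexts.** $\Lambda$ is the set of untyped $\lambda$-terms (up to $\alpha$-equivalence), and $\mathrm{NF}\subseteq\Lambda$ is the set of $\beta$-normal forms. A context $C[\,]$ is a $\lambda$-term with exactly one hole $[\,]$. $C[M]$ is the result of filling the hole with $M$; binders of $C$ may capture free variables of $M$. A context $C[\,]$ is normal if $C[P]\in\mathrm{NF}$ for all $P\in\mathrm{NF}$. We write $M\,\vec N$ for $M\,N_1\cdots N_n$ (left-associated), where $n\ge 0$. **Atoms and $\Lambda^\bullet$.** For each $M\in\Lambda$ there is a new formal symbol $\underline{M}$, called an atom. Atoms are constants: they have no free variables, and substitution leaves them unchanged. For $M\in\Lambda$, $M^\bullet$ replaces each free occurrence of each variable $x$ in $M$ by the atom $\underline{x}$. Set $\Lambda^\bullet=\{M^\bullet: M\in\Lambda\}$, with substitution extended to these terms by treating atoms as constants. **The set $\Lambda^{\mathrm{rb}}$.** It is the least set such that: 1. $\underline{M}\in\Lambda^{\mathrm{rb}}$ for all $M\in\Lambda$; 2. $\langle C[\,],M\rangle\in\Lambda^{\mathrm{rb}}$ for every context $C[\,]$ and every $M\in\Lambda^\bullet$; 3. $\langle C[\,],M\,\vec N\rangle\in\Lambda^{\mathrm{rb}}$ for every context $C[\,]$, every $M\in\Lambda^{\mathrm{rb}}$ and all $N_1,\dots,N_n\in\Lambda^\bullet$. **The relation $\to$ on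 $\Lambda^{\mathrm{rb}}$.** It is the least relation satisfying: - (R1) $\langle C[\,],\underline{M}\rangle\to\underline{C[M]}$ for $M\in\Lambda$; - (R2) $\langle C[\,],\lambda x.M\rangle\to\langle C[\lambda x.[\,]],M[x:=\underline{x}]\rangle$ for $\lambda x.M\in\Lambda^\bullet$; - (R3) $\langle C[\,],\underline{M}\,N_0\,\vec N\rangle\to\langle C[\,],\langle M\,[\,],N_0\rangle\,\vec N\rangle$ for $M\in\Lambda$ and $N_0,\vec N\in\Lambda^\bullet$; - (R4) $\langle C[\,],(\lambda x.M)\,N_0\,\vec N\rangle\to\langle C[\,],M[x:=N_0]\,\vec N\rangle$ for $\lambda x.M,N_0,\vec N\in\Lambda^\bullet$; - (R5) if $M\to M'$ with $M,M'\in\Lambda^{\mathrm{rb}}$, then $\langle C[\,],M\,\vec N\rangle\to\langle C[\,],M'\,\vec N\rangle$ for every context $C[\,]$ and $\vec N\in\Lambda^\bullet$. $\to^*$ denotes the reflexive–transitive closure of $\to$. *)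

From Stdlib Require Import List Arith Relations.
Import ListNotations.

Inductive term : Type :=
| Var : nat -> term
| App : term -> term -> term
| Lam : term -> term.

Fixpoint nf (t : term) : Prop :=
  match t with
  | Var _ => True
  | Lam u => nf u
  | App u v =>
      (match u with Lam _ => False | _ => True end) /\ nf u /\ nf v
  end.

Fixpoint lift (k : nat) (t : term) : term :=
  match t with
  | Var n => if n <? k then Var n else Var (S n)
  | App u v => App (lift k u) (lift k v)
  | Lam u => Lam (lift (S k) u)
  end.

Inductive ctx : Type :=
| Hole : ctx
| CLam : ctx -> ctx
| CAppFun : ctx -> term -> ctx
| CAppArg : term -> ctx -> ctx.

(* C[M]: filling the hole; binders of C capture free variables of M
   (no index shifting). *)
Fixpoint plug (C : ctx) (M : term) : term :=
  match C with
  | Hole => M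
  | CLam C' => Lam (plug C' M)
  | CAppFun C' N => App (plug C' M) N
  | CAppArg N C' => App N (plug C' M)
  end.

Fixpoint ccomp (C D : ctx) : ctx :=
  match C with
  | Hole => D
  | CLam C' => CLam (ccomp C' D)
  | CAppFun C' N => CAppFun (ccomp C' D) N
  | CAppArg N C' => CAppArg N (ccomp C' D)
  end.

Definition normal_ctx (C : ctx) : Prop :=
  forall P, nf P -> nf (plug C P).

(* XAtom M is the atom underline{M}; XMach C X is <C[], X>.
   The content M of an atom is interpreted relative to the hole of the
   innermost enclosing machine state (so the de Bruijn indices of M are
   captured by the binders of that context when R1 fires). *)
Inductive xt : Type :=
| XVar : nat -> xt
| XApp : xt -> xt -> xt
| XLam : xt -> xt
| XAtom : term -> xt
| XMach : ctx -> xt -> xt.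

Definition apps (M : xt) (Ns : list xt) : xt := fold_left XApp Ns M.

Fixpoint bulletk (k : nat) (t : term) : xt :=
  match t with
  | Var n => if n <? k then XVar n else XAtom (Var (n - k))
  | App u v => XApp (bulletk k u) (bulletk k v)
  | Lam u => XLam (bulletk (S k) u)
  end.
Definition bullet (t : term) : xt := bulletk 0 t.

Definition in_bullet (X : xt) : Prop := exists M, X = bullet M.

Fixpoint xlift (k : nat) (X : xt) : xt :=
  match X with
  | XVar n => if n <? k then XVar n else XVar (S n)
  | XApp u v => XApp (xlift k u) (xlift k v)
  | XLam u => XLam (xlift (S k) u)
  | XAtom t => XAtom t
  | XMach C u => XMach C u
  end.

Fixpoint xsubst (k : nat) (N : xt) (X : xt) : xt :=
  match X with
  | XVar n => if n =? k then N else if n <? k then XVar n else XVar (pred n)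
  | XApp u v => XApp (xsubst k N u) (xsubst k N v)
  | XLam u => XLam (xsubst (S k) (xlift 0 N) u)
  | XAtom t => XAtom t
  | XMach C u => XMach C u
  end.

(* M[x := underline{x}] in rule R2, where x is bound by the lambda just
   moved into the context.  In de Bruijn form the new atom is
   underline{Var 0}, and every existing atom content is lifted by one,
   because the hole of C[lambda x.[]] lies under one more binder. *)
Fixpoint xopen (k : nat) (X : xt) : xt :=
  match X with
  | XVar n => if n =? k then XAtom (Var 0)
              else if n <? k then XVar n else XVar (pred n)
  | XApp u v => XApp (xopen k u) (xopen k v)
  | XLam u => XLam (xopen (S k) u)
  | XAtom t => XAtom (lift 0 t)
  | XMach C u => XMach C u
  end.

Inductive in_rb : xt -> Prop :=
| rb_atom : forall M, in_rb (XAtom M)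
| rb_bullet : forall C M, in_bullet M -> in_rb (XMach C M)
| rb_app : forall C M Ns, in_rb M -> Forall in_bullet Ns ->
    in_rb (XMach C (apps M Ns)).

Inductive step : xt -> xt -> Prop :=
| R1 : forall C M,
    step (XMach C (XAtom M)) (XAtom (plug C M))
| R2 : forall C M,
    in_bullet (XLam M) ->
    step (XMach C (XLam M)) (XMach (ccomp C (CLam Hole)) (xopen 0 M))
| R3 : forall C M N0 Ns,
    in_bullet N0 -> Forall in_bullet Ns ->
    step (XMach C (apps (XAtom M) (N0 :: Ns)))
         (XMach C (apps (XMach (CAppArg M Hole) N0) Ns))
| R4 : forall C M N0 Ns,
    in_bullet (XLam M) -> in_bullet N0 -> Forall in_bullet Ns ->
    step (XMach C (apps (XLam M) (N0 :: Ns)))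
         (XMach C (apps (xsubst 0 N0 M) Ns))
| R5 : forall C M M' Ns,
    step M M' -> in_rb M -> in_rb M' -> Forall in_bullet Ns ->
    step (XMach C (apps M Ns)) (XMach C (apps M' Ns)).

Definition steps : xt -> xt -> Prop := clos_refl_trans xt step.

From Stdlib Require Import List Arith.

(* The reduction keeps an invariant: every atom is a normal form, every
   context of a state is normal, and every atom or state below the root is
   not an abstraction, resp. has a context of the form [M D[]].  The last
   clause is what makes R1 safe below the root (filling [M D[]] yields an
   application, never a new redex) and what makes the context [M []]
   created by R3 normal ([M] is then a normal non-abstraction).  R2 keeps
   contexts normal because [C[lambda x.[]]] is normal when [C] is. *)

Definition notlam (t : term) : Prop :=
  match t with Lam _ => False | _ => True end.

Definition is_arg_ctx (C : ctx) : Prop :=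
  match C with CAppArg _ _ => True | _ => False end.

Fixpoint wf (nested : bool) (X : xt) : Prop :=
  match X with
  | XVar _ => True
  | XApp u v => wf true u /\ wf true v
  | XLam u => wf true u
  | XAtom t => nf t /\ (nested = true -> notlam t)
  | XMach C u => (nested = true -> is_arg_ctx C) /\ normal_ctx C /\ wf true u
  end.

Lemma notlam_lift (t : term) (k : nat) : notlam t -> notlam (lift k t).
Proof. destruct t; simpl; auto. destruct (n <? k); simpl; auto. Qed.

Lemma nf_lift (t : term) (k : nat) : nf t -> nf (lift k t).
Proof.
  revert k; induction t as [n | t1 IH1 t2 IH2 | t IH]; intros k Ht; simpl in *.
  - destruct (n <? k); exact I.
  - destruct Ht as [Hhead [H1 H2]]. repeat split; auto.
    apply (notlam_lift t1 k Hhead).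
  - auto.
Qed.

Lemma plug_ccomp (C D : ctx) (P : term) :
  plug (ccomp C D) P = plug C (plug D P).
Proof. induction C; simpl; f_equal; auto. Qed.

Lemma normal_ctx_ccomp_lam (C : ctx) :
  normal_ctx C -> normal_ctx (ccomp C (CLam Hole)).
Proof. intros HC P HP. rewrite plug_ccomp. apply HC, HP. Qed.

Lemma normal_ctx_arg (M : term) :
  nf M -> notlam M -> normal_ctx (CAppArg M Hole).
Proof. intros HM Hlam P HP. simpl. destruct M; simpl in *; tauto. Qed.

Lemma notlam_plug_arg (C : ctx) (P : term) :
  is_arg_ctx C -> notlam (plug C P).
Proof. destruct C; simpl; tauto. Qed.

Lemma is_arg_ctx_ccomp_lam (C : ctx) :
  is_arg_ctx C -> is_arg_ctx (ccomp C (CLam Hole)).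
Proof. destruct C; simpl; tauto. Qed.

Lemma wf_bulletk (t : term) (k : nat) : wf true (bulletk k t).
Proof.
  revert k; induction t; intros k; simpl; auto.
  destruct (n <? k); simpl; auto.
Qed.

Lemma wf_xlift (X : xt) (k : nat) : wf true X -> wf true (xlift k X).
Proof.
  revert k; induction X; intros k HX; simpl in *; auto.
  - destruct (n <? k); exact I.
  - destruct HX; auto.
Qed.

Lemma wf_xsubst (X N : xt) (k : nat) :
  wf true N -> wf true X -> wf true (xsubst k N X).
Proof.
  revert k N; induction X; intros k N HN HX; simpl in *; auto.
  - destruct (n =? k); auto. destruct (n <? k); exact I.
  - destruct HX; auto.
  - apply IHX; auto. apply wf_xlift, HN.
Qed.

Lemma wf_xopen (X : xt) (k : nat) : wf true X -> wf true (xopen k X).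
Proof.
  revert k; induction X; intros k HX; simpl in *; auto.
  - destruct (n =? k); simpl; auto. destruct (n <? k); exact I.
  - destruct HX; auto.
  - destruct HX as [Hnf Hlam].
    split; [apply nf_lift, Hnf | intros; apply notlam_lift; auto].
Qed.

Lemma wf_apps (X : xt) (Ns : list xt) :
  wf true (apps X Ns) <-> wf true X /\ Forall (wf true) Ns.
Proof.
  revert X; induction Ns as [| N Ns IH]; intros X; unfold apps in *; simpl.
  - intuition.
  - rewrite IH. simpl. rewrite Forall_cons_iff. tauto.
Qed.

Lemma wf_step (X Y : xt) (nested : bool) : step X Y -> wf nested X -> wf nested Y.
Proof.
  intros Hstep; revert nested.
  induction Hstep; intros nested HX; simpl in *;
    destruct HX as [Harg [HC Hbody]].
  - destruct Hbody as [Hnf Hlam]. split.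
    + apply HC, Hnf.
    + intros Hn. apply notlam_plug_arg, Harg, Hn.
  - repeat split.
    + intros Hn. apply is_arg_ctx_ccomp_lam, Harg, Hn.
    + apply normal_ctx_ccomp_lam, HC.
    + apply wf_xopen, Hbody.
  - repeat split; auto.
    apply wf_apps in Hbody as [[[Hnf Hlam] HN0] HNs].
    apply wf_apps. split; auto. simpl.
    split; [| split]; auto. apply normal_ctx_arg; auto.
  - repeat split; auto.
    apply wf_apps in Hbody as [[HM HN0] HNs].
    apply wf_apps. split; auto. apply wf_xsubst; auto.
  - repeat split; auto.
    apply wf_apps in Hbody as [HM HNs].
    apply wf_apps. split; auto.
Qed.

Lemma wf_steps (X Y : xt) : steps X Y -> wf false X -> wf false Y.
Proof.
  induction 1; auto. apply wf_step; assumption.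
Qed.

Theorem proposition6 (C : ctx) (M N : term) :
  normal_ctx C -> steps (XMach C (bullet M)) (XAtom N) -> nf N.
Proof.
  intros HC Hsteps.
  assert (Hinit : wf false (XMach C (bullet M))).
  { simpl. repeat split; auto. discriminate. apply wf_bulletk. }
  destruct (wf_steps _ _ Hsteps Hinit) as [HN _].
  exact HN.
Qed.
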